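(* In the situation of Lemma 2 (frontier ${}^ts\,y x^h y\,s$, points $I$, $J=I+(0,-1)$, rays $i_n=t(I+n(1,0))$, $j_n=t(J+n(1,-1))$), let $k'_n=t(J+n(1,-1)+(1,0))$ be the value immediately to the right of $j_n$. Then $k'_n-1=(h+1)\,i_n\,i_{n+1}$ for all $n\in\mathbf N$. Consequently, with $k_n=t(J+n(1,-1)+(0,-1))$, the triple $(j_{n+1}+j_n,\;j_{n+1}-j_n,\;k_n+k'_n)$ is a Pythagorean triple: $(j_{n+1}-j_n)^2+(k_n+k'_n)^2=(j_{n+1}+j_n)^2$.
   Context: Cartesian coordinates on $\mathbf Z^2$. The transpose ${}^tw$ of a word reverses it and exchanges $x$ and $y$. Setting: $h\in\mathbf N$, $s$ a right-infinite word over $\{x,y\}$ with the frontier ${}^ts\,yx^hy\,s$ admissible (neither half ultimately constant), embedded as lattice points $P_i$ with $P_i-P_{i-1}=(1,0)$ for a letter $x$ and $(0,1)$ for a letter $y$; $t:\mathbf Z^2\to\mathbf N$ is the unique tiling with $t(a,b+1)t(a+1,b)-t(a,b)t(a+1,b+1)=1$ for all $(a,b)$ and $t(P_i)=1$; $I$ is the path point between $x^h$ and the following $y$ of the middle factor $yx^hy$. *)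

From HB Require Import structures.
From mathcomp Require Import all_boot all_order all_algebra.
Set Implicit Arguments. Unset Strict Implicit. Unset Printing Implicit Defensive.
Import Order.TTheory GRing.Theory Num.Theory.
Local Open Scope ring_scope.

(* Letters over {x,y}: true encodes x, false encodes y. *)
Definition letter_step (c : bool) : int * int := if c then (1, 0) else (0, 1).

Definition padd (p q : int * int) : int * int := (p.1 + q.1, p.2 + q.2).

(* The bi-infinite word  ^t s . y x^h y . s  indexed by Z:
   w_0 = y, w_1..w_h = x, w_{h+1} = y, w_{h+2+m} = s_m (m >= 0),
   w_{-1-m} = transpose letter of s_m (m >= 0).
   (^t s reverses s and swaps x,y, so reading leftwards from position -1
   we see swapped s_0, s_1, ...). Note Negz m = -(m+1). *)
Definition frontier_letter (h : nat) (s : nat -> bool) (k : int) : bool :=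
  match k with
  | Posz m =>
      if m == 0%N then false
      else if (m <= h)%N then true
      else if m == h.+1 then false
      else s (m - h.+2)%N
  | Negz m => ~~ s m
  end.

Definition admissible_half (s : nat -> bool) : Prop :=
  ~ (exists (N : nat) (c : bool), forall m : nat, (N <= m)%N -> s m = c).

Definition is_SL2_tiling (t : int -> int -> nat) : Prop :=
  forall a b : int,
    (t a (b + 1))%:Z * (t (a + 1) b)%:Z - (t a b)%:Z * (t (a + 1) (b + 1))%:Z = 1.

Definition tile_at (t : int -> int -> nat) (p : int * int) : int := (t p.1 p.2)%:Z.

From HB Require Import structures.
From mathcomp Require Import all_boot all_order all_algebra.
From mathcomp Require Import ring zify.
From Stdlib Require Import Classical.
Set Implicit Arguments. Unset Strict Implicit. Unset Printing Implicit Defensive.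
Import Order.TTheory GRing.Theory Num.Theory.
Local Open Scope ring_scope.

(* After translating the point I to the origin, the frontier runs through
   (-h,-1), (-h,0), ..., (0,0), (0,1); its right half is the path of s started
   at (0,1) and its left half is the image of the right half under the
   reflection (a,b) |-> (1-h-b, -1-a).
   Three facts about SL2-tilings with nonzero entries drive the proof:
   - along each column (resp. row) the entries satisfy a three-term linear
     recurrence whose coefficient depends only on the column (resp. row);
   - entries adjacent to the frontier are determined by the local shape of the
     frontier, so they agree at mirrored positions of the two halves;
   - hence the column x+1 and the row -2-x have the same coefficient.
   With K = h+1 and i_x = t(x,0), an induction on x then gives, along the
   antidiagonal starting at J = (0,-1),
     t(x,-1-x) = K i_x^2,  t(x+1,-1-x) = K i_x i_(x+1) + 1,
     t(x,-2-x) = K i_x i_(x+1) - 1.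
   The second equation is the claimed identity; the Pythagorean identity
   follows from the unimodular square j_n, k'_n, k_n, j_(n+1) and k'_n - k_n = 2. *)

Definition sl2 {R : pzRingType} (T : int -> int -> R) : Prop :=
  forall a b : int, T a (b + 1) * T (a + 1) b - T a b * T (a + 1) (b + 1) = 1.

Lemma sl2_transpose (R : comPzRingType) (T : int -> int -> R) :
  sl2 T -> sl2 (fun a b => T b a).
Proof. by move=> T_sl2 a b; rewrite -(T_sl2 b a); ring. Qed.

Lemma sl2_neq0 (R : numDomainType) (T : int -> int -> R) :
  sl2 T -> (forall a b, 0 <= T a b) -> forall a b, T a b != 0.
Proof.
move=> T_sl2 T_ge0 a b; apply/eqP => Tab0.
have := T_sl2 a (b - 1); rewrite subrK Tab0 mul0r sub0r => /eqP.
rewrite -(inj_eq oppr_inj) opprK => /eqP prod_eq.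
have : 0 <= T a (b - 1) * T (a + 1) b by rewrite mulr_ge0.
by rewrite prod_eq oppr_ge0 ler10.
Qed.

(* If g never vanishes and f/g is constant on consecutive integers, f/g is
   constant on Z (stated without division). *)
Lemma ratio_const (R : idomainType) (g f : int -> R) :
  (forall y, g y != 0) -> (forall y, g (y + 1) * f y = g y * f (y + 1)) ->
  forall y y', g y' * f y = g y * f y'.
Proof.
move=> g_neq0 g_f_step.
have up y (n : nat) : g (y + n%:Z) * f y = g y * f (y + n%:Z).
  elim: n => [|n IH]; first by rewrite addr0.
  have -> : y + n.+1%:Z = y + n%:Z + 1 by ring.
  apply: (mulfI (g_neq0 (y + n%:Z))).
  transitivity (g (y + n%:Z + 1) * (g (y + n%:Z) * f y)); first ring.
  rewrite IH; transitivity (g y * (g (y + n%:Z + 1) * f (y + n%:Z))); first ring.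
  by rewrite g_f_step; ring.
move=> y y'; case: (lerP y y') => [le_yy'|lt_y'y].
- have [n ->] : exists n : nat, y' = y + n%:Z by exists `|y' - y|%N; lia.
  exact: up.
- have [n ->] : exists n : nat, y = y' + n%:Z by exists `|y - y'|%N; lia.
  by rewrite up.
Qed.

Lemma column_relation (R : idomainType) (T : int -> int -> R) :
  sl2 T -> (forall a b, T a b != 0) -> forall a y y',
  T a y' * (T (a - 1) y + T (a + 1) y) = T a y * (T (a - 1) y' + T (a + 1) y').
Proof.
move=> T_sl2 T_neq0 a.
apply: (@ratio_const _ (T a) (fun y => T (a - 1) y + T (a + 1) y) (T_neq0 a)) => y /=.
have left_sq := T_sl2 (a - 1) y; rewrite subrK in left_sq.
apply: subr0_eq; transitivity
  ((T a (y + 1) * T (a + 1) y - T a y * T (a + 1) (y + 1))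
 - (T (a - 1) (y + 1) * T a y - T (a - 1) y * T a (y + 1))); first ring.
by rewrite T_sl2 left_sq subrr.
Qed.

Lemma row_relation (R : idomainType) (T : int -> int -> R) :
  sl2 T -> (forall a b, T a b != 0) -> forall b x x',
  T x' b * (T x (b - 1) + T x (b + 1)) = T x b * (T x' (b - 1) + T x' (b + 1)).
Proof.
move=> T_sl2 T_neq0 b x x'.
exact: (column_relation (sl2_transpose T_sl2) (fun a b => T_neq0 b a) b x x').
Qed.

Lemma pythagorean_of_square (R : comPzRingType) (j j' k k' : R) :
  j * j' - k * k' = 1 -> k' = k + 2 ->
  (j' - j) ^+ 2 + (k + k') ^+ 2 = (j' + j) ^+ 2.
Proof.
move=> square k'_eq; subst k'.
transitivity ((j' + j) ^+ 2 + 4 * (1 - (j * j' - k * (k + 2)))); first ring.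
by rewrite square subrr mulr0 addr0.
Qed.

Lemma admissible_x_after (s : nat -> bool) :
  admissible_half s -> forall m0, exists2 m, (m0 <= m)%N & s m.
Proof.
move=> adm m0; apply: NNPP => no_x; apply: adm; exists m0, false => m le_m0m.
by apply/negbTE/negP => sm; apply: no_x; exists m.
Qed.

Lemma padd_subK (p q e : int * int) : p = padd q e -> q = (p.1 - e.1, p.2 - e.2).
Proof. by move=> ->; case: q e => [a b] [c d] /=; congr pair; ring. Qed.

Section Frontier.

Variables (h : nat) (s : nat -> bool) (Q : int -> int * int) (T : int -> int -> int).
Hypothesis adm : admissible_half s.
Hypothesis Q_step :
  forall k : int, Q k = padd (Q (k - 1)) (letter_step (frontier_letter h s k)).
Hypothesis T_sl2 : sl2 T.
Hypothesis T_neq0 : forall a b, T a b != 0.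
Hypothesis T_path : forall k, T (Q k).1 (Q k).2 = 1.
Hypothesis Q_origin : Q h%:Z = (0, 0).

(* QR m is the point of the right half from which the letter s_m is read;
   QL m is its counterpart on the left half, where the transposed letter of
   s_m arrives. *)
Definition QR (m : nat) : int * int := Q (h.+1 + m)%N%:Z.
Definition QL (m : nat) : int * int := Q (Negz m).

Lemma QR_step m : QR m.+1 = padd (QR m) (letter_step (s m)).
Proof.
rewrite /QR Q_step; congr padd; first by congr Q; lia.
rewrite /frontier_letter !ifF; [by congr (letter_step (s _)); lia | lia..].
Qed.

Lemma QL_step m : QL m = padd (QL m.+1) (letter_step (~~ s m)).
Proof. by rewrite /QL Q_step; congr (padd (Q _) _); rewrite !NegzE; lia. Qed.

Lemma Q_middle d : (d <= h)%N -> Q (h - d)%N%:Z = (- d%:Z, 0).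
Proof.
elim: d => [|d IH] le_dh; first by rewrite subn0 Q_origin oppr0.
have := Q_step (h - d)%N%:Z; rewrite IH; last exact: ltnW.
rewrite /frontier_letter ifF; last lia.
rewrite ifT; last exact: leq_subr.
have -> : (h - d)%N%:Z - 1 = (h - d.+1)%N%:Z by lia.
by move/padd_subK => ->; rewrite /=; congr pair; lia.
Qed.

Lemma QL0 : QL 0 = (- h%:Z, -1).
Proof.
have := Q_step 0; have := Q_middle (leqnn h); rewrite subnn => ->.
by rewrite /QL => /padd_subK ->; rewrite /=; congr pair; ring.
Qed.

Lemma QR0 : QR 0 = (0, 1).
Proof.
rewrite /QR addn0 Q_step /frontier_letter ltnn eqxx /=.
have -> : h.+1%:Z - 1 = h%:Z by lia.
by rewrite Q_origin /padd /= add0r.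
Qed.

Lemma QL_mirror m : QL m = (1 - h%:Z - (QR m).2, -1 - (QR m).1).
Proof.
elim: m => [|m IH]; first by rewrite QL0 QR0 /=; congr pair; ring.
move: IH; rewrite QL_step QR_step => /esym/padd_subK ->.
by case: (s m); case: (QR m) => a b /=; congr pair; ring.
Qed.

Lemma T_middle m : (m <= h)%N -> T (m%:Z - h%:Z) 0 = 1.
Proof.
move=> le_mh; have := T_path m%:Z.
have := Q_middle (leq_subr m h); rewrite subKn // => -> /=.
by have -> : - (h - m)%N%:Z = m%:Z - h%:Z by lia.
Qed.

Lemma T_below_middle m : (m <= h)%N -> T (m%:Z - h%:Z) (-1) = m.+1%:Z.
Proof.
elim: m => [|m IH] le_mh; first by have := T_path (Negz 0); rewrite -/(QL 0) QL0 sub0r.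
have le_mh' := ltnW le_mh; have square := T_sl2 (m%:Z - h%:Z) (-1).
have next_col : m%:Z - h%:Z + 1 = m.+1%:Z - h%:Z by ring.
rewrite next_col (_ : -1 + 1 = 0) // !T_middle // IH // in square.
by move/eqP: square; rewrite mul1r mulr1 subr_eq => /eqP ->; ring.
Qed.

Lemma T_below_origin : T 0 (-1) = h.+1%:Z.
Proof. by have := T_below_middle (leqnn h); rewrite subrr. Qed.

Lemma T_QR m : T (QR m).1 (QR m).2 = 1. Proof. exact: T_path. Qed.
Lemma T_QL m : T (QL m).1 (QL m).2 = 1. Proof. exact: T_path. Qed.

Definition right_adj (m : nat) : int := T ((QR m).1 + 1) (QR m).2.
Definition left_adj (m : nat) : int := T (QL m).1 ((QL m).2 - 1).

Lemma right_adj_rec m : right_adj m = if s m then 1 else 1 + right_adj m.+1.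
Proof.
rewrite /right_adj; move: (T_QR m) (T_QR m.+1); rewrite QR_step.
case: (s m); case: (QR m) => a b /= T_ab; rewrite ?addr0 // => T_ab1.
by have := T_sl2 a b; rewrite T_ab T_ab1 !mul1r => /eqP; rewrite subr_eq => /eqP.
Qed.

Lemma left_adj_rec m : left_adj m = if s m then 1 else 1 + left_adj m.+1.
Proof.
rewrite /left_adj; move: (T_QL m) (T_QL m.+1); rewrite QL_step.
case: (s m); case: (QL m.+1) => u v /= T_u1v T_uv; rewrite ?addr0 ?addrK // in T_u1v *.
have := T_sl2 u (v - 1); rewrite subrK T_uv T_u1v mul1r mulr1.
by move/eqP; rewrite subr_eq => /eqP.
Qed.

(* Since s contains x's further on, the two recursions have the same
   solution. *)
Lemma adj_mirror m : right_adj m = left_adj m.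
Proof.
have [m' le_mm' x_m'] := admissible_x_after adm m.
rewrite -(subnKC le_mm') in x_m'; move: (m' - m)%N x_m' => d x_d; clear le_mm'.
elim: d m x_d => [|d IH] m x_d; rewrite right_adj_rec left_adj_rec.
- by rewrite addn0 in x_d; rewrite x_d.
- by case: (s m) => //; rewrite IH // addSnnS.
Qed.

Lemma reach_x_step d m0 : s (m0 + d)%N -> exists2 m, (QR m).1 = (QR m0).1 & s m.
Proof.
elim: d m0 => [|d IH] m0 x_d; first by exists m0; rewrite // -(addn0 m0).
case x_m0: (s m0); first by exists m0.
rewrite -addSnnS in x_d; have [m col_m x_m] := IH _ x_d.
by exists m; rewrite // col_m QR_step x_m0 /= addr0.
Qed.

Lemma column_exit (a : nat) : exists2 m, (QR m).1 = a%:Z & s m.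
Proof.
elim: a => [|a [m col_m x_m]].
  have [m _ x_m] := admissible_x_after adm 0.
  by have := @reach_x_step m 0; rewrite add0n QR0 => /(_ x_m).
have [m' le_m' x_m'] := admissible_x_after adm m.+1.
rewrite -(subnKC le_m') in x_m'; have [m'' col_m'' x_m''] := reach_x_step x_m'.
by exists m''; rewrite // col_m'' QR_step x_m /= col_m; lia.
Qed.

(* Column n+1 (read on row 0) and row -2-n (read on column n+1) have the same
   linearisation coefficient c: at the exit (n,y) -> (n+1,y) of column n the
   coefficient of column n+1 is 1 + T(n+2,y), and the mirrored vertical step
   of the left half gives the same value for row -2-n by adj_mirror. *)
Lemma crossing_coefficient (n : nat) : exists c : int,
  T n%:Z 0 + T (n%:Z + 1 + 1) 0 = c * T (n%:Z + 1) 0 /\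
  T (n%:Z + 1) (-1 - n%:Z - 1 - 1) + T (n%:Z + 1) (-1 - n%:Z)
    = c * T (n%:Z + 1) (-1 - n%:Z - 1).
Proof.
have [m col_m x_m] := column_exit n.
have QL_m1 : QL m.+1 = ((QL m).1, (QL m).2 - 1).
  by move: (QL_step m); rewrite x_m => /padd_subK ->; rewrite /= subr0.
move: (T_QR m) (T_QR m.+1) (T_QL m) (T_QL m.+1) (adj_mirror m.+1).
rewrite /right_adj /left_adj QL_m1 QR_step QL_mirror x_m /=.
case: (QR m) col_m => a y /= ->; set z := 1 - h%:Z - y.
rewrite addr0 => T_ny T_n1y T_z T_z1 mirror.
exists (1 + T (n%:Z + 1 + 1) y); split.
- have := column_relation T_sl2 T_neq0 (n%:Z + 1) 0 y.
  by rewrite addrK T_ny T_n1y mul1r => ->; rewrite mulrC.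
- have := row_relation T_sl2 T_neq0 (-1 - n%:Z - 1) (n%:Z + 1) z.
  by rewrite subrK T_z T_z1 -mirror mul1r => ->; ring.
Qed.

(* The values j_x, k'_x, k_x on the antidiagonal through J = (0,-1). *)
Definition diag_invariant (x : int) : Prop :=
  [/\ T x (-1 - x) = h.+1%:Z * T x 0 * T x 0,
      T (x + 1) (-1 - x) = h.+1%:Z * T x 0 * T (x + 1) 0 + 1
    & T x (-1 - x - 1) = h.+1%:Z * T x 0 * T (x + 1) 0 - 1].

(* Base case: uses the framing letters y and row -1 of x^h. *)
Lemma diag_invariant_origin : diag_invariant 0.
Proof.
have T_I : T 0 0 = 1 by have := T_path h%:Z; rewrite Q_origin.
have T_right : T 1 0 = 1 + T 1 1.
  have := T_sl2 0 0; rewrite add0r T_I mul1r.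
  have -> : T 0 1 = 1 by have := T_QR 0; rewrite QR0.
  by rewrite mul1r => /eqP; rewrite subr_eq addrC => /eqP.
have row := row_relation T_sl2 T_neq0 (-1) 0 (- h%:Z).
have := T_QL 0; have := T_middle (leq0n h); have := adj_mirror 0.
rewrite /right_adj /left_adj QR0 QL0 /= add0r sub0r => mirror T_h0 T_h1.
rewrite (_ : -1 + 1 = 0) // T_h0 T_h1 -mirror T_I T_below_origin mul1r in row.
rewrite /diag_invariant subr0 add0r T_I T_below_origin !mulr1; split => //.
- have := T_sl2 0 (-1); rewrite (_ : -1 + 1 = 0) // add0r T_I T_below_origin mul1r.
  by move/eqP; rewrite subr_eq addrC => /eqP.
- by rewrite T_right; apply: (addIr 1); rewrite row; ring.
Qed.

(* From the square j_x, k'_x, k_x, j_(x+1). *)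
Lemma diag_j_next x : diag_invariant x ->
  T (x + 1) (-1 - x - 1) = h.+1%:Z * T (x + 1) 0 * T (x + 1) 0.
Proof.
case=> j_x k'_x k_x; have := T_sl2 x (-1 - x - 1).
rewrite subrK k'_x k_x => /eqP; rewrite subr_eq => /eqP square.
apply: (mulfI (T_neq0 x (-1 - x))); rewrite square j_x; ring.
Qed.

(* From the square k'_x, k'_(x+1), j_(x+1) and the linearisation of column
   x+1 between rows 0 and -1-x. *)
Lemma diag_kprime_next x : diag_invariant x ->
  T (x + 1 + 1) (-1 - x - 1) = h.+1%:Z * T (x + 1) 0 * T (x + 1 + 1) 0 + 1.
Proof.
move=> inv_x; have j_x1 := diag_j_next inv_x; case: inv_x => j_x k'_x _.
have column := column_relation T_sl2 T_neq0 (x + 1) 0 (-1 - x).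
have := T_sl2 (x + 1) (-1 - x - 1); rewrite subrK => /eqP; rewrite subr_eq => /eqP square.
apply: (mulfI (T_neq0 (x + 1) (-1 - x))); rewrite square.
rewrite addrK k'_x j_x in column; rewrite k'_x j_x1.
set K := h.+1%:Z; set i := T x 0; set i' := T (x + 1) 0; set i'' := T (x + 1 + 1) 0.
set m := T (x + 1 + 1) (-1 - x).
transitivity (1 + K * i' * (i' * (K * i * i + m)) - K * i' * (i' * (K * i * i)));
  first ring.
by rewrite -column; ring.
Qed.

(* From the common coefficient of column n+1 and row -2-n. *)
Lemma diag_k_next (n : nat) : diag_invariant n%:Z ->
  T (n%:Z + 1) (-1 - n%:Z - 1 - 1)
    = h.+1%:Z * T (n%:Z + 1) 0 * T (n%:Z + 1 + 1) 0 - 1.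
Proof.
move=> inv_n; have j_n1 := diag_j_next inv_n; case: inv_n => _ k'_n _.
have [c [column row]] := crossing_coefficient n.
apply: (addIr (T (n%:Z + 1) (-1 - n%:Z))); rewrite row k'_n j_n1.
transitivity (h.+1%:Z * T (n%:Z + 1) 0 * (c * T (n%:Z + 1) 0)); first ring.
by rewrite -column; ring.
Qed.

Lemma diag_invariant_all (n : nat) : diag_invariant n%:Z.
Proof.
elim: n => [|n inv_n]; first exact: diag_invariant_origin.
rewrite -addn1 PoszD /diag_invariant opprD addrA; split.
- exact: diag_j_next.
- exact: diag_kprime_next.
- exact: diag_k_next.
Qed.

End Frontier.

Theorem mainTheorem7 (h : nat) (s : nat -> bool)
    (P : int -> int * int) (t : int -> int -> nat) :
  admissible_half s ->
  (forall k : int, P k = padd (P (k - 1)) (letter_step (frontier_letter h s k))) ->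
  is_SL2_tiling t ->
  (forall k : int, t (P k).1 (P k).2 = 1%N) ->
  let I := P (h%:Z) in
  let J := padd I (0, -1) in
  let i := fun n : nat => tile_at t (padd I (n%:Z, 0)) in
  let j := fun n : nat => tile_at t (padd J (n%:Z, - n%:Z)) in
  let k' := fun n : nat => tile_at t (padd (padd J (n%:Z, - n%:Z)) (1, 0)) in
  let k := fun n : nat => tile_at t (padd (padd J (n%:Z, - n%:Z)) (0, -1)) in
  forall n : nat,
    k' n - 1 = (h.+1)%:Z * i n * i n.+1 /\
    (j n.+1 - j n) ^+ 2 + (k n + k' n) ^+ 2 = (j n.+1 + j n) ^+ 2.
Proof.
move=> adm P_step t_sl2 t_path I J i j k' k n.
pose T a b : int := (t (I.1 + a) (I.2 + b))%:Z.
pose Q m : int * int := ((P m).1 - I.1, (P m).2 - I.2).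
have T_sl2 : sl2 T by move=> a b; rewrite /T !addrA; exact: t_sl2.
have T_neq0 := sl2_neq0 T_sl2 (fun a b => le0z_nat _).
have Q_step m : Q m = padd (Q (m - 1)) (letter_step (frontier_letter h s m)).
  by rewrite /Q P_step /padd /=; congr pair; ring.
have T_path m : T (Q m).1 (Q m).2 = 1 by rewrite /T /= !subrKC t_path.
have Q_origin : Q h%:Z = (0, 0) by rewrite /Q !subrr.
have [_ k'_eq k_eq] := diag_invariant_all adm Q_step T_sl2 T_neq0 T_path Q_origin n.
have tileE p : tile_at t p = T (p.1 - I.1) (p.2 - I.2) by rewrite /T !subrKC.
have i_n1 : i n.+1 = T (n%:Z + 1) 0 by rewrite /i tileE /=; congr T; ring.
have j_n : j n = T n%:Z (-1 - n%:Z) by rewrite /j /J tileE /=; congr T; ring.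
have j_n1 : j n.+1 = T (n%:Z + 1) (-1 - n%:Z - 1).
  by rewrite /j /J tileE /=; congr T; ring.
have k_n : k n = T n%:Z (-1 - n%:Z - 1) by rewrite /k /J tileE /=; congr T; ring.
have k'_n : k' n = T (n%:Z + 1) (-1 - n%:Z) by rewrite /k' /J tileE /=; congr T; ring.
rewrite i_n1 j_n j_n1 k_n k'_n; split; first by rewrite k'_eq; ring.
apply: pythagorean_of_square; last by rewrite k'_eq k_eq; ring.
by have := T_sl2 n%:Z (-1 - n%:Z - 1); rewrite subrK.
Qed.
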